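(* Let $(A,\diamond,\circ,\lambda)$ be a left semi-truss such that $(A,\diamond)$ is a left cancellative semigroup, let $e$ be an idempotent of $(A,\diamond)$, and define $\sigma:A\to A$ by $\sigma(a)=a\circ e$. Write $a\triangleright b:=\lambda(a,b)$. Then: (1) $\sigma(a\circ b)=a\circ\sigma(b)$ for all $a,b\in A$; (2) $\sigma(a\circ b)=\sigma(a)\diamond(a\triangleright\sigma(b))$ for all $a,b\in A$; (3) $\sigma$ is bijective if and only if $(A,\circ)$ has a right identity $n$ and there is $u\in A$ with $e\circ u=u\circ e=n$.
   Context: A left semi-truss $(A,\diamond,\circ,\lambda)$ is a set $A$ with two associative binary operations $\diamond,\circ$ and a function $\lambda:A\times A\to A$ such that $a\circ(b\diamond c)=(a\circ b)\diamond\lambda(a,c)$ for all $a,b,c\in A$. A semigroup $(A,\diamond)$ is left cancellative if $a\diamond b=a\diamond c$ implies $b=c$. *)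

From mathcomp Require Import ssreflect ssrfun ssrbool.

Definition left_semi_truss (A : Type) (dia circ : A -> A -> A)
  (lam : A -> A -> A) : Prop :=
  associative dia /\ associative circ /\
  (forall a b c : A, circ a (dia b c) = dia (circ a b) (lam a c)).

Definition left_cancellative (A : Type) (dia : A -> A -> A) : Prop :=
  forall a b c : A, dia a b = dia a c -> b = c.

From mathcomp Require Import ssreflect ssrfun ssrbool.

Set Implicit Arguments.
Unset Strict Implicit.

(* Parts (1) and (3) only use the associativity of [circ]: right multiplication
   by [e] is bijective exactly when [e] is invertible with respect to a right
   identity. Part (2) follows from the truss law once one knows that the
   idempotent [e] is a left identity of the left cancellative [dia]. *)

Lemma idem_left_id (A : Type) (dia : A -> A -> A) (e : A) :
  associative dia -> left_cancellative A dia -> dia e e = e ->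
  left_id e dia.
Proof. by move=> diaA dia_canc ee x; apply: (dia_canc e); rewrite diaA ee. Qed.

Section RightMultiplication.

Variables (A : Type) (circ : A -> A -> A) (e : A).
Hypothesis circA : associative circ.

Let sigma (a : A) : A := circ a e.

Lemma sigma_circ (a b : A) : sigma (circ a b) = circ a (sigma b).
Proof. by rewrite /sigma circA. Qed.

Lemma bij_circr_inv_right_id :
  bijective sigma -> exists2 n : A, right_id n circ &
    exists u : A, circ e u = n /\ circ u e = n.
Proof.
case=> g gK Kg; have sigma_inj := can_inj gK.
have nR : right_id (g e) circ.
  by move=> a; apply: sigma_inj; rewrite sigma_circ Kg.
exists (g e) => //; exists (g (g e)); split; last exact: Kg.
by apply: sigma_inj; rewrite sigma_circ !Kg nR.
Qed.

Lemma inv_right_id_bij_circr (n u : A) :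
  right_id n circ -> circ e u = n -> circ u e = n -> bijective sigma.
Proof.
move=> nR eu ue; exists (circ^~ u) => a; rewrite /sigma -circA.
- by rewrite eu nR.
- by rewrite ue nR.
Qed.

End RightMultiplication.

Theorem proposition2p4 (A : Type) (dia circ lam : A -> A -> A) (e : A)
  (Htruss : left_semi_truss A dia circ lam)
  (Hcanc : left_cancellative A dia)
  (He : dia e e = e) :
  let sigma := fun a : A => circ a e in
  (forall a b : A, sigma (circ a b) = circ a (sigma b)) /\
  (forall a b : A, sigma (circ a b) = dia (sigma a) (lam a (sigma b))) /\
  (bijective sigma <->
     exists n : A, (forall a : A, circ a n = a) /\
       exists u : A, circ e u = n /\ circ u e = n).
Proof.
move=> sigma; case: Htruss => diaA [circA truss].
have e_id := idem_left_id diaA Hcanc He.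
split; first exact: sigma_circ.
split.
  by move=> a b; rewrite /sigma -circA -{1}[circ b e]e_id truss.
split.
- by case/(bij_circr_inv_right_id circA) => n nR ?; exists n.
- by case=> n [nR [u [eu ue]]]; apply: (inv_right_id_bij_circr circA nR eu ue).
Qed.
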